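(* Let $I\subseteq S=\Bbbk[x_1,\dots,x_n]$ be a squarefree monomial ideal and let $L$ be its squarefree lexification. Then $L\subseteq(x_1)$ if and only if $I\subseteq(x_i)$ for some variable $x_i$.
   Context: Let $\Bbbk$ be a field, $S=\Bbbk[x_1,\dots,x_n]$, $R=S/(x_1^2,\dots,x_n^2)$. A monomial ideal is squarefree if its minimal monomial generators are squarefree. A monomial ideal of $R$ is lex if each degree component is spanned by an initial segment, in the lexicographic order with $x_1>\dots>x_n$, of the squarefree monomials of that degree. A squarefree monomial ideal $L\subseteq S$ is squarefree lex if $LR$ is lex in $R$. The squarefree lexification of a squarefree monomial ideal $I\subseteq S$ is the unique squarefree lex ideal $L\subseteq S$ having the same Hilbert function as $I$ in $S$ (equivalently, $LR$ is the lex ideal of $R$ with the same Hilbert function as $IR$). *)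

(* Variables x_1,...,x_n are indexed by 'I_n
   (x_1 <-> index 0).  A monomial is an exponent vector 'I_n -> nat; a
   squarefree monomial x_A is identified with its support A : {set 'I_n}.
   A squarefree monomial ideal is given by a (finite) set of squarefree
   monomial generators  gens : {set {set 'I_n}}. *)
From mathcomp Require Import all_boot.
Set Implicit Arguments. Unset Strict Implicit. Unset Printing Implicit Defensive.

Definition mon_in (n : nat) (gens : {set {set 'I_n}}) (m : 'I_n -> nat) : bool :=
  [exists G in gens, [forall i in G, 0 < m i]].

Definition sqf_mon (n : nat) (A : {set 'I_n}) : 'I_n -> nat :=
  fun i => nat_of_bool (i \in A).

(* Hilbert function of the ideal in S: number of monomials of degree d in it
   (= dim_k I_d).  A monomial of degree d has all exponents <= d. *)
Definition hilb (n : nat) (gens : {set {set 'I_n}}) (d : nat) : nat :=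
  #|[set m : {ffun 'I_n -> 'I_d.+1} |
      ((\sum_(i < n) (m i : nat)) == d) && mon_in gens (fun i => (m i : nat))]|.

(* lex order with x_1 > ... > x_n on squarefree monomials: x_A >lex x_B iff the
   first variable where they differ occurs in A *)
Definition lex_gt (n : nat) (A B : {set 'I_n}) : bool :=
  [exists i : 'I_n, [&& i \in A, i \notin B &
     [forall j : 'I_n, (j < i)%N ==> ((j \in A) == (j \in B))]]].

(* L is squarefree lex: LR is lex in R = S/(x_1^2,...,x_n^2), i.e. in each
   degree the squarefree monomials of L form an initial lex segment *)
Definition sqf_lex (n : nat) (L : {set {set 'I_n}}) : Prop :=
  forall A B : {set 'I_n}, #|A| = #|B| -> lex_gt B A ->
    mon_in L (sqf_mon A) -> mon_in L (sqf_mon B).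

Definition ideal_sub_var (n : nat) (gens : {set {set 'I_n}}) (i : 'I_n) : Prop :=
  forall m : 'I_n -> nat, mon_in gens m -> 0 < m i.

(* If I lies in (x_i), every monomial not divisible by x_i lies outside I: in degree d
   these are about d^(n-2) monomials.  If I lies in no (x_j), a monomial outside I must
   miss at least two variables (it cannot contain the support of every generator), and
   there are only O(d^(n-3)) of those.  So being inside some principal ideal (x_i) can be
   read off the Hilbert function.  For the squarefree lex ideal L, being inside some (x_j)
   forces being inside (x_1): replacing x_j by x_1 in a generator avoiding x_1 gives a
   lex-larger squarefree monomial of the same degree, which would lie in L outside (x_j). *)
From mathcomp Require Import all_boot zify.
Set Implicit Arguments. Unset Strict Implicit. Unset Printing Implicit Defensive.

Section SubVar.
Variable n : nat.
Implicit Types (g : {set {set 'I_n}}) (G : {set 'I_n}) (i j : 'I_n).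

Lemma mon_in_sqf_mon g G : G \in g -> mon_in g (sqf_mon G).
Proof.
by move=> gG; apply/exists_inP; exists G => //; apply/forall_inP => x xG; rewrite /sqf_mon xG.
Qed.

Lemma ideal_sub_varP g i : reflect (ideal_sub_var g i) [forall G in g, i \in G].
Proof.
apply: (iffP forall_inP) => [gi m /exists_inP[G gG /forall_inP mG] | gi G gG].
  exact: mG (gi G gG).
by have := gi _ (mon_in_sqf_mon gG); rewrite /sqf_mon; case: (i \in G).
Qed.

Lemma exists_sub_varP g :
  reflect (exists j, ideal_sub_var g j) [exists j, [forall G in g, j \in G]].
Proof. by apply: (iffP existsP) => -[j /ideal_sub_varP gj]; exists j. Qed.

Lemma sqf_lex_sub_var_first (hn : 0 < n) L j :
  sqf_lex L -> ideal_sub_var L j -> ideal_sub_var L (Ordinal hn).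
Proof.
set x1 := Ordinal hn => lexL Lj; apply/ideal_sub_varP/forall_inP => G LG.
apply: contraT => x1G.
have jG : j \in G by move/ideal_sub_varP/forall_inP: Lj; apply.
have jx1 : j != x1 by apply: contraNneq x1G => <-.
pose B := x1 |: (G :\ j).
have cardB : #|G| = #|B| by rewrite cardsU1 (cardsD1 j G) jG !inE (negbTE x1G) andbF.
have ltGB : lex_gt B G by apply/existsP; exists x1; rewrite !inE eqxx x1G; apply/forallP.
have := Lj _ (lexL G B cardB ltGB (mon_in_sqf_mon LG)).
by rewrite /sqf_mon !inE eqxx (negbTE jx1).
Qed.

End SubVar.

Lemma card_bigcup_le (I T : finType) (P : pred I) (F : I -> {set T}) :
  #|\bigcup_(i | P i) F i| <= \sum_(i | P i) #|F i|.
Proof.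
apply: (big_ind2 (fun (A : {set T}) k => #|A| <= k)) => [|A a B b HA HB|i _] //.
- by rewrite cards0.
- exact: leq_trans (leq_card_setU A B).1 (leq_add HA HB).
Qed.

Section Monomials.
Variable n : nat.
Implicit Types (g : {set {set 'I_n}}) (d K : nat) (i a b : 'I_n).

Local Notation mono d := {ffun 'I_n -> 'I_d.+1}.

Definition monos d := [set m : mono d | \sum_(x < n) (m x : nat) == d].

Definition standard_monos g d :=
  [set m : mono d in monos d | ~~ mon_in g (fun x => (m x : nat))].

Definition monos_off_var d i := [set m : mono d in monos d | (m i : nat) == 0].

Definition monos_off_pair d a b :=
  [set m : mono d in monos_off_var d a | (m b : nat) == 0].

Definition monos_off_two d := \bigcup_a \bigcup_(b | b != a) monos_off_pair d a b.

Lemma hilb_add_card_standard g d : hilb g d + #|standard_monos g d| = #|monos d|.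
Proof.
rewrite -(cardsID [set m : mono d | mon_in g (fun x => (m x : nat))] (monos d)) /hilb.
by congr (_ + _); apply: eq_card => m; rewrite !inE // andbC.
Qed.

Lemma card_standard_eq g1 g2 d :
  hilb g1 d = hilb g2 d -> #|standard_monos g1 d| = #|standard_monos g2 d|.
Proof. by move=> h12; apply/(@addnI (hilb g1 d)); rewrite {2}h12 !hilb_add_card_standard. Qed.

Lemma off_var_sub_standard g d i :
  ideal_sub_var g i -> monos_off_var d i \subset standard_monos g d.
Proof.
move=> gi; apply/subsetP => m; rewrite !inE => /andP[-> /eqP mi0] /=.
by apply/negP => /gi; rewrite mi0.
Qed.

Lemma standard_sub_off_two g d (i0 : 'I_n) :
  ~ (exists j, ideal_sub_var g j) -> standard_monos g d \subset monos_off_two d.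
Proof.
move=> g_not; apply/subsetP => m; rewrite !inE => /andP[deg_m m_out].
(* a variable missing from m, if there is one; i0 only serves when m misses none *)
pose j := odflt i0 [pick a | (m a : nat) == 0].
have /forall_inPn[G gG jG] : ~~ [forall G in g, j \in G].
  by apply/ideal_sub_varP => gj; apply: g_not; exists j.
apply: contraNT m_out => not_two; apply/exists_inP; exists G => //.
apply/forall_inP => x xG; rewrite lt0n; apply/negP => mx0.
have mj0 : (m j : nat) == 0 by rewrite /j; case: pickP => [a //|/(_ x)]; rewrite mx0.
have jx : j != x by apply: contraNneq jG => ->.
move: not_two; apply/negP/negPn/bigcupP; exists x => //; apply/bigcupP; exists j => //.
by rewrite !inE deg_m mx0 mj0.
Qed.

Lemma card_monos_off_pair_le d a b :
  3 <= n -> a != b -> #|monos_off_pair d a b| <= d.+1 ^ (n - 3).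
Proof.
move=> n_ge3 ab.
have [c c_ab] : exists c, c \notin [set a; b].
  have : 0 < #|~: [set a; b]| by rewrite cardsCs setCK cards2 ab card_ord; lia.
  by case/card_gt0P => c; rewrite inE; exists c.
pose D := c |: [set a; b].
pose erase (m : mono d) : mono d := [ffun x => if x \in D then ord0 else m x].
(* m a = m b = 0, and m c is recovered from the degree *)
have erase_inj : {in monos_off_pair d a b &, injective erase}.
  move=> m1 m2; rewrite !inE -!andbA => /and3P[/eqP deg1 /eqP a1 /eqP b1].
  move=> /and3P[/eqP deg2 /eqP a2 /eqP b2] /ffunP eq12.
  have eq_off_c x : x != c -> m1 x = m2 x.
    move=> xc; have := eq12 x; rewrite !ffunE; case: ifP => [xD _|_ //].
    apply/val_inj; move: xD; rewrite !inE (negbTE xc) /= => /orP[]/eqP->.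
    - by rewrite a1 a2.
    - by rewrite b1 b2.
  apply/ffunP => x; have [->|/eq_off_c //] := eqVneq x c.
  apply/val_inj; have : \sum_(y < n) (m1 y : nat) = \sum_(y < n) (m2 y : nat).
    by rewrite deg1 deg2.
  rewrite (bigD1 c) //= [in RHS](bigD1 c) //=.
  by rewrite (eq_bigr _ (fun y yc => congr1 val (eq_off_c y yc))) => /addIn.
rewrite -(card_in_imset erase_inj).
apply: (@leq_trans #|pffun_on (ord0 : 'I_d.+1) (~: D) [set: 'I_d.+1]|).
  apply/subset_leq_card/subsetP => _ /imsetP[m _ ->].
  apply/pffun_onP; split=> [|y _]; last by rewrite inE.
  by apply/subsetP => x; rewrite inE ffunE in_setC; case: (x \in D); rewrite ?eqxx.
by rewrite card_pffun_on cardsT card_ord cardsCs setCK cardsU1 cards2 ab c_ab card_ord.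
Qed.

Lemma card_monos_off_two_le d : 3 <= n -> #|monos_off_two d| <= n * (n * d.+1 ^ (n - 3)).
Proof.
move=> n_ge3; apply: leq_trans (card_bigcup_le _ _) _.
apply: (@leq_trans (\sum_(a < n) n * d.+1 ^ (n - 3))); last by rewrite sum_nat_const card_ord.
apply: leq_sum => a _; apply: leq_trans (card_bigcup_le _ _) _.
apply: (@leq_trans (\sum_(b < n) d.+1 ^ (n - 3))); last by rewrite sum_nat_const card_ord.
rewrite big_mkcond /=.
apply: leq_sum => b _; case: ifP => // ba.
by apply: card_monos_off_pair_le; rewrite // eq_sym ba.
Qed.

Lemma card_monos_off_var_ge d K i :
  2 <= n -> n * K <= d -> K.+1 ^ (n - 2) <= #|monos_off_var d i|.
Proof.
move=> n_ge2 nK_le_d.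
have [j ji] : exists j, j != i.
  have : 0 < #|~: [set i]| by rewrite cardsCs setCK cards1 card_ord; lia.
  by case/card_gt0P => j; rewrite !inE; exists j.
pose D := ~: [set i; j].
pose F := pffun_on (ord0 : 'I_K.+1) D [set: 'I_K.+1].
pose deg (f : mono K) := \sum_(y < n) (f y : nat).
(* exponents at most K away from x_i and x_j; x_j absorbs the remaining degree *)
pose lift (f : mono K) : mono d :=
  [ffun x => if x == j then inord (d - deg f) else inord (f x)].
have f_le_d (f : mono K) x : (f x : nat) < d.+1.
  have := ltn_ord (f x); have : K <= n * K by rewrite leq_pmull; lia.
  lia.
have deg_le_d (f : mono K) : deg f <= d.
  apply: leq_trans nK_le_d; rewrite -[n in n * K]card_ord -sum_nat_const.
  by apply: leq_sum => y _; rewrite -ltnS.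
have f_off_D (f : mono K) : f \in F -> forall x, x \notin D -> f x = ord0.
  move=> /pffun_onP[/subsetP supp_f _] x xD; apply/eqP; apply: contraNT xD => fx.
  by apply: supp_f; rewrite inE.
have iD : i \notin D by rewrite !inE eqxx.
have jD : j \notin D by rewrite !inE eqxx orbT.
have lift_inj : {in F &, injective lift}.
  move=> f1 f2 F1 F2 /ffunP eq12; apply/ffunP => x.
  have [->|xj] := eqVneq x j; first by rewrite (f_off_D _ F1 _ jD) (f_off_D _ F2 _ jD).
  have := eq12 x; rewrite !ffunE (negbTE xj) => /(congr1 val).
  by rewrite /= !inordK // => /val_inj.
have -> : K.+1 ^ (n - 2) = #|F|.
  by rewrite card_pffun_on cardsT !card_ord cardsCs setCK cards2 eq_sym ji card_ord.
rewrite -(card_in_imset lift_inj); apply/subset_leq_card/subsetP => _ /imsetP[f Ff ->].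
rewrite !inE ffunE ifN_eqC // (f_off_D _ Ff _ iD) inordK // andbT.
rewrite (bigD1 j) //= ffunE eqxx inordK ?ltnS ?leq_subr //.
have -> : \sum_(x < n | x != j) (lift f x : nat) = deg f.
  rewrite [deg f](bigD1 j) //= (f_off_D _ Ff _ jD) add0n.
  by apply: eq_bigr => x xj; rewrite ffunE (negbTE xj) inordK.
by rewrite subnK.
Qed.

Lemma monos_off_two_small d : n <= 2 -> n.-1 <= d -> monos_off_two d = set0.
Proof.
move=> n_le2 d_ge; apply/setP => m; rewrite inE; apply/bigcupP => -[a _ /bigcupP[b ba]].
rewrite !inE -andbA => /and3P[/eqP deg_m /eqP ma /eqP mb].
have n_eq2 : n = 2.
  by move: ba; rewrite -val_eqE /=; have := ltn_ord a; have := ltn_ord b; lia.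
have a_or_b x : (x == a) || (x == b).
  move: ba; rewrite -!val_eqE /=.
  by have := ltn_ord a; have := ltn_ord b; have := ltn_ord x; lia.
suff : \sum_(x < n) (m x : nat) = 0 by rewrite deg_m; lia.
by apply: big1 => x _; case/orP: (a_or_b x) => /eqP ->.
Qed.

Lemma off_two_lt_off_var i : exists d, #|monos_off_two d| < #|monos_off_var d i|.
Proof.
have [n_le1 | n_ge2] := leqP n 1.
  exists 0; rewrite monos_off_two_small ?cards0; try lia.
  apply/card_gt0P; exists [ffun => ord0]; rewrite !inE ffunE eqxx andbT.
  by apply/eqP/big1 => x _; rewrite ffunE.
have [n_le2 | n_ge3] := leqP n 2.
  exists 1; rewrite monos_off_two_small ?cards0; try lia.
  by have := card_monos_off_var_ge (d := 1) (K := 0) i n_ge2; rewrite exp1n muln0; apply.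
(* n^2 (nK+1)^(n-3) <= n^(n-1) (K+1)^(n-3) < (K+1)^(n-2) as soon as n^(n-1) <= K *)
pose K := n ^ n; exists (n * K).
apply: leq_ltn_trans (card_monos_off_two_le _ n_ge3) _.
apply: leq_trans (card_monos_off_var_ge i n_ge2 (leqnn _)).
have pow_le : (n * K).+1 ^ (n - 3) <= (n * K.+1) ^ (n - 3).
  have base : (n * K).+1 <= n * K.+1 by rewrite mulnS; lia.
  by elim: (n - 3) => // e IH; rewrite !expnS leq_mul.
apply: leq_ltn_trans (leq_mul (leqnn n) (leq_mul (leqnn n) pow_le)) _.
have -> : n - 2 = (n - 3).+1 by lia.
rewrite expnMn !mulnA expnS ltn_pmul2r ?expn_gt0 // -mulnA -!expnS ltnS leq_exp2l; lia.
Qed.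

Lemma hilb_eq_sub_var g1 g2 i : (forall d, hilb g1 d = hilb g2 d) ->
  ideal_sub_var g1 i -> exists j, ideal_sub_var g2 j.
Proof.
move=> hilb12 g1i; apply/exists_sub_varP/contraT => /exists_sub_varP g2_not.
have [d lt_d] := off_two_lt_off_var i.
suff : #|monos_off_var d i| <= #|monos_off_two d| by rewrite leqNgt lt_d.
apply: leq_trans (subset_leq_card (off_var_sub_standard d g1i)) _.
rewrite (card_standard_eq (hilb12 d)).
exact/subset_leq_card/(standard_sub_off_two d i g2_not).
Qed.

End Monomials.

Theorem lemma3p5 (n : nat) (hn : 0 < n) (I L : {set {set 'I_n}}) :
  sqf_lex L -> (forall d : nat, hilb L d = hilb I d) ->
  (ideal_sub_var L (Ordinal hn) <-> exists i : 'I_n, ideal_sub_var I i).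
Proof.
move=> lexL hilbLI; split=> [L1 | [i Ii]]; first exact: hilb_eq_sub_var hilbLI L1.
have [j Lj] := hilb_eq_sub_var (fun d => esym (hilbLI d)) Ii.
exact: sqf_lex_sub_var_first lexL Lj.
Qed.
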